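(* Let $P=\sum_{k=1}^K N_k$, $\kappa=2P$, and assume $N_I\ge\kappa$; write $N=N_I$. Let $\mathbf U\in\bar{\mathcal U}$ be such that every square submatrix of $\mathbf M_{\mathbf U}$ is nonsingular. Let $\mathbf a_n^T$ and $\mathbf b_n^T$ ($n=1,\dots,N$) be the rows of $\mathbf M_{\mathbf U}$ and $\boldsymbol\Gamma_{\mathbf U}$, respectively, let $\mathbf A$ be the block matrix $[\mathbf A_{m,n}]_{m,n=1}^N$ with $\mathbf A_{m,n}\in\mathbb R^{\kappa\times\min\{\kappa,N-n+1\}}$, whose $q$-th column is $\mathbf a_{q+n-1}$ if $m=n$, $\mathbf a_n$ if $m=q+n-1\neq n$, and $\mathbf 0$ otherwise, and let $\mathbf b=[\mathbf b_1^T,\dots,\mathbf b_N^T]^T\in\mathbb R^{N\kappa}$. Then $$\operatorname{rank}([\mathbf A\ \ \mathbf b])=N\kappa-\frac{\kappa(\kappa-1)}{2}.$$ (In particular, together with $\operatorname{rank}\mathbf A=N\kappa-\kappa(\kappa-1)/2$, the system $\mathbf A\mathbf x=\mathbf b$ is solvable.)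
   Context: $Z_0>0$, $\mathbf H_r\in\mathbb C^{P\times N_I}$ is arbitrary, $\mathsf i$ is the imaginary unit, and $\mathcal R(\cdot),\mathcal I(\cdot)$ denote entrywise real and imaginary parts. $\bar{\mathcal U}=\{\mathbf U\in\mathbb C^{N_I\times P}:\ \mathbf U^H\mathbf U=\mathbf H_r\mathbf H_r^H,\ \mathbf U^T\mathbf H_r^H=(\mathbf U^T\mathbf H_r^H)^T\}$. For $\mathbf U\in\mathbb C^{N_I\times P}$, $\mathbf M_{\mathbf U}=[\mathcal R(\mathsf iZ_0(\mathbf H_r^H+\mathbf U))\ \ \mathcal I(\mathsf iZ_0(\mathbf H_r^H+\mathbf U))]\in\mathbb R^{N_I\times 2P}$ and $\boldsymbol\Gamma_{\mathbf U}=[\mathcal R(\mathbf U-\mathbf H_r^H)\ \ \mathcal I(\mathbf U-\mathbf H_r^H)]\in\mathbb R^{N_I\times 2P}$. The matrix $\mathbf A$ has $N\kappa$ rows and $N\kappa-\kappa(\kappa-1)/2$ columns; its column indexed by block $n$ and position $q$ corresponds to the variable $B_{n,n+q-1}$ of a real symmetric band matrix $\mathbf B$ with band width $\kappa-1$, and $\mathbf A\mathbf x=\mathbf b$ is the equation $\mathbf B\mathbf M_{\mathbf U}=\boldsymbol\Gamma_{\mathbf U}$ written row by row. *)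

From HB Require Import structures.
From mathcomp Require Import all_boot all_order all_algebra.
From mathcomp Require Import complex.
Set Implicit Arguments. Unset Strict Implicit. Unset Printing Implicit Defensive.
Import Order.TTheory GRing.Theory Num.Theory.
Local Open Scope ring_scope.

Section Defs.
Variable R : rcfType.
Local Notation C := (complex R).

Definition ctr m n (X : 'M[C]_(m, n)) : 'M[C]_(n, m) := map_mx (fun z : C => (let: Complex a b := z in Complex a (- b))) X^T.

Definition ReM m n (X : 'M[C]_(m, n)) : 'M[R]_(m, n) := map_mx (@complex.Re R) X.
Definition ImM m n (X : 'M[C]_(m, n)) : 'M[R]_(m, n) := map_mx (@complex.Im R) X.

Definition iC : C := Complex 0 1.

Definition in_Ubar P N (Hr : 'M[C]_(P, N)) (U : 'M[C]_(N, P)) : Prop :=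
  ctr U *m U = Hr *m ctr Hr /\ (U^T *m ctr Hr)^T = U^T *m ctr Hr.

Definition M_U P N (Z0 : R) (Hr : 'M[C]_(P, N)) (U : 'M[C]_(N, P)) : 'M[R]_(N, P + P) :=
  let X := (iC * Complex Z0 0) *: (ctr Hr + U) in row_mx (ReM X) (ImM X).

Definition Gamma_U P N (Hr : 'M[C]_(P, N)) (U : 'M[C]_(N, P)) : 'M[R]_(N, P + P) :=
  let X := U - ctr Hr in row_mx (ReM X) (ImM X).

Definition all_square_submx_nonsingular m n (M : 'M[R]_(m, n)) : Prop :=
  forall k (f : 'I_k -> 'I_m) (g : 'I_k -> 'I_n),
    injective f -> injective g -> \det (mxsub f g M) != 0.

(* entry i of the (0-based) k-th row of M, or 0 if k is out of range (never
   used out of range below) *)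
Definition rowent m n (M : 'M[R]_(m, n)) (k : nat) (i : 'I_n) : R :=
  if insub k is Some k' then M k' i else 0.

(* This is the paper's definition shifted to 0-based indices. *)
Definition A_blk N kappa (M : 'M[R]_(N, kappa)) (m n : 'I_N) :
    'M[R]_(kappa, minn kappa (N - n)) :=
  \matrix_(i < kappa, q < minn kappa (N - n))
    if m == n then rowent M (q + n) i
    else if (m : nat) == (q + n)%N then M n i
    else 0.

Definition A_mx N kappa (M : 'M[R]_(N, kappa)) :
    'M[R]_(\sum_(m < N) kappa, \sum_(n < N) minn kappa (N - n)) :=
  \mxblock_(m < N, n < N) A_blk M m n.

Definition b_vec N kappa (G : 'M[R]_(N, kappa)) : 'cV[R]_(\sum_(m < N) kappa) :=
  \mxcol_(m < N) (row m G)^T.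

End Defs.

From Pilot Require Import Defs.
From HB Require Import structures.
From mathcomp Require Import all_boot all_order all_algebra.
From mathcomp Require Import complex.
From mathcomp Require Import zify ring lra.
Set Implicit Arguments. Unset Strict Implicit. Unset Printing Implicit Defensive.
Import Order.TTheory GRing.Theory Num.Theory.
Local Open Scope ring_scope.

(* The matrix A is the band equation B M = Gamma written row by row, so it is block
   lower triangular, and its diagonal blocks are transposed row submatrices of M;
   these are injective because every square submatrix of M is nonsingular, hence A
   has full column rank N kappa - kappa (kappa - 1) / 2. Conversely, each pair p < q
   of columns yields the functional Y |-> (M^T Y)_pq - (M^T Y)_qp on stacked rows. It
   kills every column of A, since M^T B M is symmetric for symmetric B, and it kills
   b, since M^T Gamma is symmetric (a consequence of U^T H_r^H being symmetric and
   U^H U = H_r H_r^H). As M has full column rank these kappa (kappa - 1) / 2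
   functionals are independent, which bounds rank [A b] from above. *)

Definition upper_pairs k := [set p : 'I_k * 'I_k | (p.1 < p.2)%N].

Lemma sum_rev_ltn k : (\sum_(i < k) (k - i.+1) = 'C(k, 2))%N.
Proof.
rewrite -bin2_sum big_mkord (reindex_inj rev_ord_inj) /=.
by apply: eq_bigr => i _; have := ltn_ord i; lia.
Qed.

Lemma card_upper_pairs k : #|upper_pairs k| = 'C(k, 2).
Proof.
rewrite -sum_rev_ltn -sum1_card.
rewrite (eq_bigl (fun p : 'I_k * 'I_k => xpredT p.1 && (p.1 < p.2)%N)); last first.
  by move=> p; rewrite inE.
rewrite -(pair_big_dep xpredT (fun i j : 'I_k => (i < j)%N) (fun _ _ => 1%N)).
apply: eq_bigr => i _.
transitivity (\sum_(i.+1 <= j < k) 1)%N; last by rewrite sum_nat_const_nat muln1.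
by rewrite big_geq_mkord; apply: eq_bigl.
Qed.

Lemma sum_minn_sub k N : (k <= N)%N ->
  (\sum_(n < N) minn k (N - n) + 'C(k, 2) = N * k)%N.
Proof.
move=> le_kN; rewrite -sum_rev_ltn (big_ord_widen N (fun i => k - i.+1)%N le_kN).
rewrite (reindex_inj rev_ord_inj) [X in (_ + X)%N]big_mkcond -big_split /=.
rewrite -[in RHS](card_ord N) -sum_nat_const; apply: eq_bigr => n _.
by case: ifP; have := ltn_ord n; lia.
Qed.

Lemma mxrank_inj_mulmx (F : fieldType) r c (A : 'M[F]_(r, c)) :
  (forall x : 'cV_c, A *m x = 0 -> x = 0) -> \rank A = c.
Proof.
move=> injA; rewrite -mxrank_tr; apply/eqP; apply: inj_row_free => v.
move/(congr1 trmx); rewrite trmx_mul trmxK trmx0 => /injA /(congr1 trmx).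
by rewrite trmxK trmx0.
Qed.

Lemma mxrank_row_mx_annihilated (F : fieldType) p r c d (Z : 'M[F]_(p, r))
    (A : 'M_(r, c)) (B : 'M_(r, d)) :
  Z *m A = 0 -> Z *m B = 0 -> (\rank Z + \rank A = r)%N ->
  \rank (row_mx A B) = \rank A.
Proof.
move=> ZA ZB rankZA; apply/eqP; rewrite eqn_leq; apply/andP; split.
  have := @mulmx0_rank_max _ _ _ _ Z (row_mx A B).
  by rewrite mul_mx_row ZA ZB row_mx0 => /(_ erefl); lia.
have := mxrankM_maxl (row_mx A B) (col_mx 1%:M (0 : 'M_(d, c))).
by rewrite mul_row_col mulmx1 mulmx0 addr0.
Qed.

Lemma all_square_submx_nonsingular_rank (R : rcfType) N k (M : 'M[R]_(N, k)) :
  all_square_submx_nonsingular M -> (k <= N)%N -> \rank M = k.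
Proof.
move=> M_nonsing le_kN; apply/eqP; rewrite eqn_leq rank_leq_col /=.
have rank_sub : \rank (rowsub (widen_ord le_kN) M) = k.
  rewrite mxrank_unit // unitmxE unitfE M_nonsing //.
  by move=> i j /(congr1 val) /= /val_inj.
by rewrite -{1}rank_sub rowsubE mxrankM_maxr.
Qed.

Section BandBlocks.
Variables (R : rcfType) (N k : nat) (M : 'M[R]_(N, k)).

Lemma band_idx_subproof (n : 'I_N) (q : 'I_(minn k (N - n))) : (q + n < N)%N.
Proof. by have := ltn_ord q; have := ltn_ord n; lia. Qed.

Definition band_idx (n : 'I_N) (q : 'I_(minn k (N - n))) : 'I_N :=
  Ordinal (@band_idx_subproof n q).

Lemma band_idx_inj n : injective (@band_idx n).
Proof. by move=> q q' /(congr1 val) /= /addIn /val_inj. Qed.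

Lemma rowent_band (n : 'I_N) (q : 'I_(minn k (N - n))) i :
  rowent M (q + n) i = M (band_idx q) i.
Proof.
rewrite /rowent; case: insubP => [j _ j_qn|]; last by rewrite band_idx_subproof.
by congr (M _ i); apply: val_inj.
Qed.

Lemma A_blk_diag n : A_blk M n n = (rowsub (@band_idx n) M)^T.
Proof. by apply/matrixP => i q; rewrite !mxE eqxx rowent_band. Qed.

Lemma A_blk_upper (m n : 'I_N) : (m < n)%N -> A_blk M m n = 0.
Proof.
move=> lt_mn; apply/matrixP => i q; rewrite !mxE.
have -> : (m == n) = false by apply: ltn_eqF.
by rewrite ifN //; apply/eqP; lia.
Qed.

(* Column (n, q) of [A_mx M] stacks the rows of [B *m M], where the symmetric [B] has
   ones exactly at (n, n + q) and (n + q, n). *)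
Lemma A_blk_col_mul n q a b :
  (M^T *m \matrix_(m, l) A_blk M m n l q) a b
    = M n a * M (band_idx q) b + (band_idx q != n)%:R * (M (band_idx q) a * M n b).
Proof.
rewrite !mxE (bigD1 n) //= !mxE eqxx rowent_band; congr (_ + _).
have [qn|ne_qn] := eqVneq (band_idx q) n; rewrite ?mul0r ?mul1r.
  apply: big1 => m ne_mn; rewrite !mxE ifN // ifN ?mulr0 //.
  by rewrite -[(q + n)%N]/(val (band_idx q)) qn.
rewrite (bigD1 (band_idx q)) //= !mxE ifN // eqxx big1 ?addr0 //.
move=> m /andP [ne_mn ne_mq].
by rewrite !mxE ifN // ifN ?mulr0.
Qed.

Lemma A_blk_col_sym n q :
  let S := M^T *m \matrix_(m, l) A_blk M m n l q in S^T = S.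
Proof.
apply/matrixP => a b; rewrite mxE !A_blk_col_mul.
by have [->|_] := eqVneq (band_idx q) n; rewrite ?mul0r ?mul1r; ring.
Qed.

Hypothesis M_nonsing : all_square_submx_nonsingular M.

Lemma A_blk_diag_inj (n : 'I_N) (v : 'cV_(minn k (N - n))) :
  A_blk M n n *m v = 0 -> v = 0.
Proof.
pose g := widen_ord (geq_minl k (N - n)).
have unitS : rowsub g (A_blk M n n) \in unitmx.
  rewrite A_blk_diag (_ : rowsub g _ = (mxsub (@band_idx n) g M)^T); last first.
    by apply/matrixP => i j; rewrite !mxE.
  rewrite unitmx_tr unitmxE unitfE M_nonsing //; first exact: band_idx_inj.
  by move=> q q' /(congr1 val) /= /val_inj.
move=> Av0; rewrite -(mulKmx unitS v) mul_rowsub_mx Av0.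
by rewrite (_ : rowsub g 0 = 0) ?mulmx0 //; apply/matrixP => i j; rewrite !mxE.
Qed.

Lemma A_mx_inj (x : 'cV_(\sum_(n < N) minn k (N - n))) :
  A_mx M *m x = 0 -> x = 0.
Proof.
rewrite -(submxcolK x) /A_mx mul_mxblock_mxrow => Ax0.
have rowsA n : \sum_m A_blk M n m *m submxcol x m = 0.
  by have := congr1 (fun X => submxcol X n) Ax0; rewrite mxcolK submxcol0.
suff x0 t (n : 'I_N) : (n < t)%N -> submxcol x n = 0.
  by rewrite (eq_mxcol (fun n : 'I_N => x0 n.+1 n (ltnSn n))) mxcol0.
elim: t n => // t IH n lt_nt; have [/IH//|ge_nt] := ltnP n t.
apply: A_blk_diag_inj; rewrite -(rowsA n) (bigD1 n) //= big1 ?addr0 // => m ne_mn.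
have [lt_nm|lt_mn|/val_inj eq_nm] := ltngtP n m; last by rewrite eq_nm eqxx in ne_mn.
  by rewrite A_blk_upper ?mul0mx.
by rewrite IH ?mulmx0 //; lia.
Qed.

Lemma rank_A_mx : \rank (A_mx M) = (\sum_(n < N) minn k (N - n))%N.
Proof. by apply: mxrank_inj_mulmx; apply: A_mx_inj. Qed.

End BandBlocks.

Section SkewFunctionals.
Variables (R : rcfType) (N k : nat) (M : 'M[R]_(N, k)).

Definition upair (j : 'I_#|upper_pairs k|) : 'I_k * 'I_k := enum_val j.

Lemma upair_lt j : ((upair j).1 < (upair j).2)%N.
Proof. by have := enum_valP j; rewrite inE. Qed.

Definition skew_at (S : 'M[R]_k) j :=
  S (upair j).1 (upair j).2 - S (upair j).2 (upair j).1.

(* Row [j] of [skew_mx] maps the stacked rows of [Y] to [skew_at (M^T *m Y) j]. *)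
Definition skew_blk (n : 'I_N) : 'M[R]_(#|upper_pairs k|, k) :=
  \matrix_(j, l) ((l == (upair j).2)%:R * M n (upair j).1
                  - (l == (upair j).1)%:R * M n (upair j).2).

Definition skew_mx := \mxrow_(n < N) skew_blk n.

Lemma sum_delta_mul (v : 'I_k -> R) p : \sum_l (l == p)%:R * v l = v p.
Proof.
rewrite (bigD1 p) //= eqxx mul1r big1 ?addr0 // => l /negbTE->.
by rewrite mul0r.
Qed.

Lemma sum_skew_blk_mul c (C : 'I_N -> 'M[R]_(k, c)) :
  \sum_n skew_blk n *m C n
    = \matrix_(j, q) skew_at (M^T *m \matrix_(n, l) C n l q) j.
Proof.
apply/matrixP => j q; rewrite summxE /skew_at !mxE -sumrB; apply: eq_bigr => n _.
rewrite !mxE; under eq_bigr do rewrite !mxE mulrBl -!mulrA.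
by rewrite sumrB !sum_delta_mul.
Qed.

Lemma skew_at_sym (S : 'M[R]_k) j : S^T = S -> skew_at S j = 0.
Proof.
by move/matrixP/(_ (upair j).2 (upair j).1); rewrite mxE /skew_at => ->; rewrite subrr.
Qed.

Lemma skew_mx_b_vec G : (M^T *m G)^T = M^T *m G -> skew_mx *m b_vec G = 0.
Proof.
move=> symMG; rewrite mul_mxrow_mxcol sum_skew_blk_mul; apply/matrixP => j q.
rewrite !mxE -[RHS](skew_at_sym j symMG).
by congr (skew_at (M^T *m _) _); apply/matrixP => n l; rewrite !mxE.
Qed.

Lemma skew_at_delta a b :
  skew_at (delta_mx (upair b).1 (upair b).2) a = (a == b)%:R.
Proof.
rewrite /skew_at !mxE.
have -> : ((upair a).2 == (upair b).1) && ((upair a).1 == (upair b).2) = false.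
  apply/negP => /andP [/eqP e1 /eqP e2].
  by have := upair_lt a; have := upair_lt b; rewrite e1 e2; lia.
by rewrite subr0 -xpair_eqE -!surjective_pairing (inj_eq enum_val_inj).
Qed.

Lemma rank_skew_mx : \rank M = k -> \rank skew_mx = #|upper_pairs k|.
Proof.
move=> rankM.
have /row_freeP [W MtW] : row_free M^T by rewrite /row_free mxrank_tr rankM.
(* A right inverse: for (p, q) = upair j, its column j stacks the rows of
   [W *m delta_mx p q], whose image under [M^T] is [delta_mx p q]. *)
apply/eqP/row_freeP.
exists (\mxcol_n \matrix_(l, j) (W *m delta_mx (upair j).1 (upair j).2) n l).
rewrite mul_mxrow_mxcol sum_skew_blk_mul; apply/matrixP => a b; rewrite !mxE.
rewrite (_ : \matrix_(n, l) _ = W *m delta_mx (upair b).1 (upair b).2); last first.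
  by apply/matrixP => n l; rewrite !mxE.
by rewrite mulmxA MtW mul1mx skew_at_delta.
Qed.

Lemma skew_mx_A : skew_mx *m A_mx M = 0.
Proof.
rewrite mul_mxrow_mxblock.
transitivity (\mxrow_(n < N) (0 : 'M[R]_(#|upper_pairs k|, minn k (N - n)))).
  apply: eq_mxrow => n; rewrite sum_skew_blk_mul; apply/matrixP => j q; rewrite !mxE.
  exact/skew_at_sym/A_blk_col_sym.
exact: mxrow0.
Qed.
End SkewFunctionals.

Section ComplexMatrices.
Variable R : rcfType.
Local Notation C := (complex R).

Lemma ctrE m n (A : 'M[C]_(m, n)) : ctr A = (map_mx conjc A)^T.
Proof. by apply/matrixP => i j; rewrite !mxE. Qed.

Lemma ctrK m n (A : 'M[C]_(m, n)) : ctr (ctr A) = A.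
Proof. by apply/matrixP => i j; rewrite !ctrE !mxE conjcK. Qed.

Lemma ctrD m n (A B : 'M[C]_(m, n)) : ctr (A + B) = ctr A + ctr B.
Proof. by rewrite !ctrE map_mxD linearD. Qed.

Lemma ctrB m n (A B : 'M[C]_(m, n)) : ctr (A - B) = ctr A - ctr B.
Proof. by rewrite !ctrE map_mxB linearB. Qed.

Lemma ctrZ m n c (A : 'M[C]_(m, n)) : ctr (c *: A) = conjc c *: ctr A.
Proof. by apply/matrixP => i j; rewrite !ctrE !mxE rmorphM. Qed.

Lemma ctrM m n p (A : 'M[C]_(m, n)) (B : 'M[C]_(n, p)) : ctr (A *m B) = ctr B *m ctr A.
Proof. by rewrite !ctrE map_mxM trmx_mul. Qed.

Definition reim_mx m n (X : 'M[C]_(m, n)) : 'M[R]_(m, n + n) :=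
  row_mx (Defs.ReM X) (Defs.ImM X).

Lemma ReM_tr_mul m n p (X : 'M[C]_(m, n)) (Y : 'M[C]_(m, p)) :
  Defs.ReM (X^T *m Y) = (Defs.ReM X)^T *m Defs.ReM Y - (Defs.ImM X)^T *m Defs.ImM Y.
Proof.
apply/matrixP => a b; rewrite !mxE raddf_sum -sumrB; apply: eq_bigr => i _.
by rewrite !mxE; case: (X i a) => ? ?; case: (Y i b).
Qed.

Lemma ImM_tr_mul m n p (X : 'M[C]_(m, n)) (Y : 'M[C]_(m, p)) :
  Defs.ImM (X^T *m Y) = (Defs.ReM X)^T *m Defs.ImM Y + (Defs.ImM X)^T *m Defs.ReM Y.
Proof.
apply/matrixP => a b; rewrite !mxE raddf_sum -big_split; apply: eq_bigr => i _.
by rewrite !mxE; case: (X i a) => ? ?; case: (Y i b).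
Qed.

Lemma ReM_ctr_mul m n p (X : 'M[C]_(m, n)) (Y : 'M[C]_(m, p)) :
  Defs.ReM (ctr X *m Y) = (Defs.ReM X)^T *m Defs.ReM Y + (Defs.ImM X)^T *m Defs.ImM Y.
Proof.
apply/matrixP => a b; rewrite !mxE raddf_sum -big_split; apply: eq_bigr => i _.
by rewrite !mxE; case: (X i a) => ? ?; case: (Y i b) => ? ? /=; ring.
Qed.

Lemma ImM_ctr_mul m n p (X : 'M[C]_(m, n)) (Y : 'M[C]_(m, p)) :
  Defs.ImM (ctr X *m Y) = (Defs.ReM X)^T *m Defs.ImM Y - (Defs.ImM X)^T *m Defs.ReM Y.
Proof.
apply/matrixP => a b; rewrite !mxE raddf_sum -sumrB; apply: eq_bigr => i _.
by rewrite !mxE; case: (X i a) => ? ?; case: (Y i b) => ? ? /=; ring.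
Qed.

Lemma ReM_tr m n (X : 'M[C]_(m, n)) : Defs.ReM X^T = (Defs.ReM X)^T.
Proof. by apply/matrixP => a b; rewrite !mxE. Qed.

Lemma ImM_tr m n (X : 'M[C]_(m, n)) : Defs.ImM X^T = (Defs.ImM X)^T.
Proof. by apply/matrixP => a b; rewrite !mxE. Qed.

Lemma ReM_ctr m n (X : 'M[C]_(m, n)) : Defs.ReM (ctr X) = (Defs.ReM X)^T.
Proof. by apply/matrixP => a b; rewrite !mxE; case: (X b a). Qed.

Lemma ImM_ctr m n (X : 'M[C]_(m, n)) : Defs.ImM (ctr X) = - (Defs.ImM X)^T.
Proof. by apply/matrixP => a b; rewrite !mxE; case: (X b a). Qed.

Lemma reim_mx_tr_mul_sym m n (X Y : 'M[C]_(m, n)) :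
    (X^T *m Y)^T = X^T *m Y -> ctr (ctr X *m Y) = ctr X *m Y ->
  let S := (reim_mx X)^T *m reim_mx Y in S^T = S.
Proof.
move=> symXY hermXY.
have /matrixP symRe := congr1 (@Defs.ReM _ _ _) symXY.
have /matrixP symIm := congr1 (@Defs.ImM _ _ _) symXY.
have /matrixP hermRe := congr1 (@Defs.ReM _ _ _) hermXY.
have /matrixP hermIm := congr1 (@Defs.ImM _ _ _) hermXY.
move: symRe symIm hermRe hermIm.
rewrite ReM_tr ImM_tr ReM_tr_mul ImM_tr_mul ReM_ctr ImM_ctr ReM_ctr_mul ImM_ctr_mul.
move=> e1 e2 e3 e4 /=; rewrite /reim_mx tr_row_mx mul_col_row tr_block_mx.
set a := _ *m Defs.ReM Y in e1 e3 *; set b := _ *m Defs.ImM Y in e1 e3 *.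
set c := _ *m Defs.ImM Y in e2 e4 *; set d := _ *m Defs.ReM Y in e2 e4 *.
by congr block_mx; apply/matrixP => i j;
  move: (e1 i j) (e2 i j) (e3 i j) (e4 i j) (e1 j i) (e2 j i) (e3 j i) (e4 j i);
  rewrite !mxE; lra.
Qed.

Section Ubar.
Variables (P N : nat) (Hr : 'M[C]_(P, N)) (U : 'M[C]_(N, P)) (c : C).
Hypothesis U_in_Ubar : in_Ubar Hr U.

Let X := c *: (ctr Hr + U).
Let Y := U - ctr Hr.

Lemma Ubar_tr_mul_sym : (X^T *m Y)^T = X^T *m Y.
Proof.
have [_ symUH] := U_in_Ubar.
have HU : (ctr Hr)^T *m U = U^T *m ctr Hr by rewrite -symUH trmx_mul trmxK.
have e : X^T *m Y = c *: (U^T *m U - (ctr Hr)^T *m ctr Hr).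
  rewrite /X /Y linearZ /= -scalemxAl [(_ + _)^T]linearD /= mulmxDl !mulmxBr HU.
  by rewrite addrC addrA subrK.
by rewrite e linearZ /= linearB /= !trmx_mul !trmxK.
Qed.

Lemma Ubar_ctr_mul_herm : conjc c = - c -> ctr (ctr X *m Y) = ctr X *m Y.
Proof.
move=> c_imag; have [UU _] := U_in_Ubar.
have e : ctr X *m Y = (- c) *: (Hr *m U - ctr U *m ctr Hr).
  by rewrite /X /Y ctrZ c_imag ctrD ctrK -scalemxAl mulmxDl !mulmxBr UU addrA subrK.
have conj_Nc : conjc (- c) = c by rewrite -c_imag conjcK.
rewrite e ctrZ conj_Nc ctrB !ctrM !ctrK.
by rewrite -opprB scalerN -scaleNr.
Qed.
End Ubar.
End ComplexMatrices.

Lemma M_U_tr_Gamma_U_sym (R : rcfType) P N Z0 (Hr : 'M[complex R]_(P, N)) U :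
  in_Ubar Hr U -> let S := (M_U Z0 Hr U)^T *m Gamma_U Hr U in S^T = S.
Proof.
(* [M_U] and [Gamma_U] are [reim_mx] of [iC * Z0 *: (ctr Hr + U)] and [U - ctr Hr]. *)
move=> U_in_Ubar; apply: reim_mx_tr_mul_sym; first exact: Ubar_tr_mul_sym.
apply: Ubar_ctr_mul_herm => //.
by apply/eqP; rewrite eq_complex /=; apply/andP; split; apply/eqP; ring.
Qed.

Theorem lemma3 (R : rcfType) (K : nat) (Nk : 'I_K -> nat) (N : nat)
    (Z0 : R) (Hr : 'M[complex R]_(\sum_(k < K) Nk k, N))
    (U : 'M[complex R]_(N, \sum_(k < K) Nk k)) :
  let P := (\sum_(k < K) Nk k)%N in
  let kappa := (P + P)%N in
  0 < Z0 ->
  (kappa <= N)%N ->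
  in_Ubar Hr U ->
  all_square_submx_nonsingular (M_U Z0 Hr U) ->
  \rank (row_mx (A_mx (M_U Z0 Hr U)) (b_vec (Gamma_U Hr U)))
    = (N * kappa - kappa * (kappa - 1) %/ 2)%N.
Proof.
move=> P kappa _ le_kN U_in_Ubar M_nonsing.
have rankM := all_square_submx_nonsingular_rank M_nonsing le_kN.
have sum_rank := sum_minn_sub le_kN.
rewrite (mxrank_row_mx_annihilated (skew_mx_A _)).
- by rewrite rank_A_mx // subn1 divn2 -bin2; move: sum_rank; rewrite /kappa /P; lia.
- by apply: skew_mx_b_vec; apply: M_U_tr_Gamma_U_sym.
rewrite rank_skew_mx // rank_A_mx // card_upper_pairs sum_nat_const card_ord.
by move: sum_rank; rewrite /kappa /P; lia.
Qed.
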